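(* Let $A\in\mathcal A_n$. Then $\tau(A)$ is naturally labeled.
   Context: $\mathcal A_n$ is the set of ordered products $A=A_1\times\cdots\times A_k$ of connected linear Nakayama algebras (over an algebraically closed field) with $n$ simple modules in total; its Kupisch series $[c_0,\dots,c_{n-1}]$ is the concatenation of those of the factors, where a connected linear Nakayama algebra with $m$ simple modules has Kupisch series $[c_0,\dots,c_{m-1}]$, $c_i=\dim e_iA$, characterized by $c_{i+1}+1\ge c_i\ge2$ for $0\le i<m-1$ and $c_{m-1}=1$. $\tau(A)$ is the tree on $\{0,\dots,n\}$, rooted at $n$, in which the parent of $i$ is $i+c_i$ for $0\le i<n$. A rooted tree with vertex set $\{0,\dots,n\}$ is naturally labeled if labels increase towards the root and, for each $i$, all children of $i$ have labels smaller than all children of $i+1$. *)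

From mathcomp Require Import all_boot.
Set Implicit Arguments. Unset Strict Implicit. Unset Printing Implicit Defensive.

(* Kupisch series [c_0,...,c_{m-1}] of a connected linear Nakayama algebra
   with m simple modules: c_{i+1}+1 >= c_i >= 2 for 0 <= i < m-1, c_{m-1} = 1. *)
Definition connected_linear_kupisch (c : seq nat) : Prop :=
  0 < size c /\
  nth 0 c (size c).-1 = 1 /\
  (forall i, i < (size c).-1 -> 2 <= nth 0 c i /\ nth 0 c i <= nth 0 c i.+1 + 1).

(* An element of A_n is an ordered product A_1 x ... x A_k of connected linear
   Nakayama algebras, represented by the ordered list of the Kupisch series of
   its factors; the total number of simple modules is n. *)
Definition in_An (n : nat) (factors : seq (seq nat)) : Prop :=
  (forall c, c \in factors -> connected_linear_kupisch c) /\
  size (flatten factors) = n.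

Definition kupisch (factors : seq (seq nat)) : seq nat := flatten factors.

(* tau(A): tree on {0,...,n} rooted at n; parent of i (0 <= i < n) is i + c_i. *)
Definition tau_parent (c : seq nat) (i : nat) : nat := i + nth 0 c i.

(* A rooted tree on {0,...,n} with root n, given by its parent map on
   {0,...,n-1}, is naturally labeled if labels increase towards the root
   (each parent lies in {0..n} and exceeds its child), and for each i all
   children of i are smaller than all children of i+1. *)
Definition naturally_labeled (n : nat) (par : nat -> nat) : Prop :=
  (forall i, i < n -> i < par i <= n) /\
  (forall i j k, i < n -> j < n -> k < n ->
     par j = i -> par k = i.+1 -> j < k).

From mathcomp Require Import all_boot.
From mathcomp Require Import zify.

Set Implicit Arguments.
Unset Strict Implicit.

(* Since c_i <= c_(i+1) + 1, the parent map p(i) = i + c_i of tau(A) is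
   nondecreasing on each factor; as the last entry of a factor is 1, the
   parents of a factor stay inside it, so p is nondecreasing across factors
   as well.  If p(j) = i and p(k) = i+1, monotonicity then forbids k <= j. *)

Definition monotone_tree (n : nat) (par : nat -> nat) : Prop :=
  (forall i, i < n -> i < par i <= n) /\
  (forall i, i.+1 < n -> par i <= par i.+1).

Lemma monotone_parent_le n par j k :
    (forall i, i.+1 < n -> par i <= par i.+1) ->
  j <= k -> k < n -> par j <= par k.
Proof.
move=> par_step le_jk lt_kn.
have convex x y : x < n -> y < n -> forall z, x < z < y -> z < n by lia.
have par_homo := homo_leq_in (D := [pred i | i < n]) (f := par)
  (r := fun x y => x <= y) leqnn leq_trans convex (fun i _ => par_step i).
by apply: par_homo; rewrite // inE; lia.
Qed.

Lemma naturally_labeled_monotone n par :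
  monotone_tree n par -> naturally_labeled n par.
Proof.
move=> [par_bound par_step]; split=> // i j k _ lt_jn lt_kn par_j par_k.
rewrite ltnNge; apply/negP => le_kj.
by have := monotone_parent_le par_step le_kj lt_jn; lia.
Qed.

Lemma tau_parent_cat a b i :
  tau_parent (a ++ b) i =
  if i < size a then tau_parent a i else size a + tau_parent b (i - size a).
Proof. by rewrite /tau_parent nth_cat; case: ltnP => //; lia. Qed.

Lemma monotone_tree_cat a b :
    monotone_tree (size a) (tau_parent a) ->
    monotone_tree (size b) (tau_parent b) ->
  monotone_tree (size (a ++ b)) (tau_parent (a ++ b)).
Proof.
rewrite size_cat => -[a_bound a_step] [b_bound b_step]; split=> i lt_i.
  rewrite tau_parent_cat; case: (ltnP i (size a)) => [lt_ia|le_ai].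
    by have := a_bound i lt_ia; lia.
  by have := b_bound (i - size a) ltac:(lia); lia.
rewrite !tau_parent_cat; case: (ltnP i.+1 (size a)) => [lt_i1a|le_ai1].
  by rewrite (ltnW lt_i1a); apply: a_step.
case: (ltnP i (size a)) => [lt_ia|le_ai].
  by have := a_bound i lt_ia; lia.
have := b_step (i - size a) ltac:(lia).
by rewrite -subSn //; lia.
Qed.

Lemma monotone_tree_kupisch c :
  connected_linear_kupisch c -> monotone_tree (size c) (tau_parent c).
Proof.
rewrite /tau_parent => -[c_gt0 [c_last c_ineq]].
have par_step i : i.+1 < size c -> i + nth 0 c i <= i.+1 + nth 0 c i.+1.
  by move=> lt_i1; have := c_ineq i ltac:(lia); lia.
split=> // i lt_i; apply/andP; split.
  case: (ltnP i (size c).-1) => [lt_i_last|ge_i_last].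
    by have := c_ineq i lt_i_last; lia.
  have -> : i = (size c).-1 by lia.
  by rewrite c_last; lia.
have le_i_last : i <= (size c).-1 by lia.
have := monotone_parent_le par_step le_i_last ltac:(lia).
by rewrite c_last; lia.
Qed.

Lemma monotone_tree_flatten (fs : seq (seq nat)) :
    (forall c, c \in fs -> connected_linear_kupisch c) ->
  monotone_tree (size (flatten fs)) (tau_parent (flatten fs)).
Proof.
elim: fs => [|c fs IHfs] fs_kupisch /=; first by split.
apply: monotone_tree_cat.
  by apply/monotone_tree_kupisch/fs_kupisch; rewrite inE eqxx.
by apply: IHfs => d d_in; apply: fs_kupisch; rewrite inE d_in orbT.
Qed.

Theorem lemma3p5 (n : nat) (factors : seq (seq nat)) :
  in_An n factors -> naturally_labeled n (tau_parent (kupisch factors)).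
Proof.
move=> [factors_kupisch <-].
exact/naturally_labeled_monotone/monotone_tree_flatten.
Qed.
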